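(* In the continuous Donation Game, let $\chi>1$ and $\kappa\in\mathbb{R}$. Suppose there exist a bounded measurable $\psi:[0,K]\to\mathbb{R}$, a probability measure $\sigma_X^0$ on $[0,K]$ and a Markov kernel $\sigma_X[x,y]$ from $[0,K]^2$ to $[0,K]$ such that for all $x,y\in[0,K]$, $$\big(u_X(x,y)-\kappa\big)-\chi\big(u_Y(x,y)-\kappa\big)=\psi(x)-\lambda\int\psi(s)\,d\sigma_X[x,y](s)-(1-\lambda)\int\psi(s)\,d\sigma_X^0(s).$$ Then $0\le\kappa\le b(K)-c(K)$.
   Context: Continuous Donation Game: fix $K>0$ and measurable nondecreasing functions $b,c:[0,K]\to\mathbb{R}$ with $b(0)=c(0)=0$ and $b(s)>c(s)$ for $s>0$. Action spaces $S_X=S_Y=[0,K]$, payoffs $u_X(x,y)=b(y)-c(x)$, $u_Y(x,y)=b(x)-c(y)$, discount factor $\lambda\in(0,1)$. *)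

From HB Require Import structures.
From mathcomp Require Import all_boot all_order all_algebra.
From mathcomp Require Import all_classical all_reals all_analysis.
Set Implicit Arguments. Unset Strict Implicit. Unset Printing Implicit Defensive.
Import Order.TTheory GRing.Theory Num.Theory.
Local Open Scope classical_set_scope.
Local Open Scope ring_scope.

Definition donation_game {R : realType} (K : R) (b c : R -> R) : Prop :=
  0 < K /\
  measurable_fun `[0, K]%classic b /\ measurable_fun `[0, K]%classic c /\
  (forall s t : R, 0 <= s -> s <= t -> t <= K -> b s <= b t) /\
  (forall s t : R, 0 <= s -> s <= t -> t <= K -> c s <= c t) /\
  b 0 = 0 /\ c 0 = 0 /\
  (forall s : R, 0 < s -> s <= K -> c s < b s).

Definition uX {R : realType} (b c : R -> R) (x y : R) : R := b y - c x.
Definition uY {R : realType} (b c : R -> R) (x y : R) : R := b x - c y.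

From HB Require Import structures.
From mathcomp Require Import all_boot all_order all_algebra all_classical all_reals all_analysis.
From mathcomp Require Import lra.
Set Implicit Arguments. Unset Strict Implicit. Unset Printing Implicit Defensive.
Import Order.TTheory GRing.Theory Num.Theory.
Local Open Scope classical_set_scope.
Local Open Scope ring_scope.

(* The right-hand side of the hypothesis is psi(x) minus a convex combination of
   two psi-averages, so (u_X - kappa) - chi (u_Y - kappa) lies between
   psi(x) - sup psi and psi(x) - inf psi.  At y = 0 the left-hand side is at most
   (chi - 1) kappa, and at y = K it is at least (chi - 1)(kappa - (b K - c K)).
   Taking the supremum, resp. the infimum, over x gives
   0 <= (chi - 1) kappa and (chi - 1)(kappa - (b K - c K)) <= 0. *)

Lemma integral_mem_bounds d (T : measurableType d) (R : realType)
    (mu : measure T R) (D : set T) (f : T -> R) (a B : R) :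
  measurable D -> mu D = 1%E -> measurable_fun D f ->
  (forall x, D x -> a <= f x <= B) ->
  exists2 r : R, (\int[mu]_(x in D) (f x)%:E = r%:E)%E & a <= r <= B.
Proof.
move=> mD muD1 mf fab.
have muDfin : (mu D < +oo)%E by rewrite muD1 ltry.
have fbd : [bounded f x | x in D].
  rewrite /bounded_near; near=> M => x Dx /=.
  have /andP[ax xB] := fab x Dx.
  apply: (@le_trans _ _ (`|a| + `|B|)); last by near: M; apply: nbhs_pinfty_ge.
  have := ler_norm a; have := ler_norm (- a); have := ler_norm B.
  have := ler_norm (- B); rewrite !normrN ler_norml => *; apply/andP; split; lra.
have intf : mu.-integrable D (EFin \o f) by exact: measurable_bounded_integrable.
have intcst k : mu.-integrable D (EFin \o cst k).
  exact: measurable_bounded_integrable _ _ (bounded_cst _ _).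
have intcstE k : (\int[mu]_(x in D) (EFin \o cst k) x = k%:E)%E.
  by rewrite -[RHS]mule1 -muD1 -integral_cst.
have lower : (a%:E <= \int[mu]_(x in D) (f x)%:E)%E.
  rewrite -[X in (X <= _)%E]intcstE; apply: le_integral => // x /set_mem Dx.
  by rewrite /= lee_fin; case/andP: (fab x Dx).
have upper : (\int[mu]_(x in D) (f x)%:E <= B%:E)%E.
  rewrite -[X in (_ <= X)%E]intcstE; apply: le_integral => // x /set_mem Dx.
  by rewrite /= lee_fin; case/andP: (fab x Dx).
move: lower upper; case: (\int[mu]_(x in D) _)%E => // r.
by rewrite !lee_fin => ar rB; exists r => //; rewrite ar rB.
Unshelve. all: by end_near.
Qed.

Lemma image_inf_le_le_sup (R : realType) (T : Type) (D : set T) (f : T -> R) (M : R) :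
  (forall x, D x -> `|f x| <= M) ->
  forall x, D x -> inf (f @` D) <= f x <= sup (f @` D).
Proof.
move=> fM x Dx.
have ne : f @` D !=set0 by exists (f x), x.
apply/andP; split.
- apply: ge_inf; last by exists x.
  by exists (- M) => _ [y Dy <-]; have := fM y Dy; rewrite ler_norml => /andP[].
- apply: sup_upper_bound; last by exists x.
  split => //; exists M => _ [y Dy <-].
  by have := fM y Dy; rewrite ler_norml => /andP[].
Qed.

Lemma ge0_of_sub_sup_le (R : realType) (T : Type) (D : set T) (f : T -> R) (e : R) :
  D !=set0 -> (forall x, D x -> f x - sup (f @` D) <= e) -> 0 <= e.
Proof.
move=> [x0 Dx0] fe; rewrite -(lerD2l (sup (f @` D))) addr0.
apply: ge_sup => [|_ [x Dx <-]]; first by exists (f x0), x0.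
by rewrite addrC -lerBlDr; apply: fe.
Qed.

Lemma le0_of_le_sub_inf (R : realType) (T : Type) (D : set T) (f : T -> R) (e : R) :
  D !=set0 -> (forall x, D x -> e <= f x - inf (f @` D)) -> e <= 0.
Proof.
move=> [x0 Dx0] fe; rewrite -(lerD2l (inf (f @` D))) addr0.
apply: lb_le_inf => [|_ [x Dx <-]]; first by exists (f x0), x0.
by rewrite addrC -lerBrDr; apply: fe.
Qed.

Lemma sub_convex_comb_bounds (R : realFieldType) (p l u v lo hi : R) :
  0 <= l <= 1 -> lo <= u <= hi -> lo <= v <= hi ->
  p - hi <= p - l * u - (1 - l) * v <= p - lo.
Proof. by move=> /andP[? ?] /andP[? ?] /andP[? ?]; apply/andP; split; nra. Qed.

Section DonationPayoffs.
Variables (R : realType) (b c : R -> R) (chi kappa : R).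

Lemma payoff_relation_at_zero x :
  b 0 = 0 -> c 0 = 0 -> 1 <= chi -> 0 <= b x -> 0 <= c x ->
  (uX b c x 0 - kappa) - chi * (uY b c x 0 - kappa) <= (chi - 1) * kappa.
Proof.
rewrite /uX /uY => -> -> chi1 bx0 cx0.
have : 0 <= chi * b x by rewrite mulr_ge0 // (le_trans ler01).
lra.
Qed.

Lemma payoff_relation_at_top K x :
  0 <= chi -> b x <= b K -> c x <= c K ->
  (chi - 1) * (kappa - (b K - c K)) <=
    (uX b c x K - kappa) - chi * (uY b c x K - kappa).
Proof.
rewrite /uX /uY => chi0 bxK cxK.
have : chi * b x <= chi * b K by rewrite ler_wpM2l.
lra.
Qed.

End DonationPayoffs.

Theorem mainTheorem13 (R : realType) (K : R) (b c : R -> R) (lambda chi kappa : R)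
  (hgame : donation_game K b c)
  (hlam : 0 < lambda < 1) (hchi : 1 < chi)
  (psi : R -> R)
  (psi_meas : measurable_fun `[0, K]%classic psi)
  (psi_bdd : exists M : R, forall s, 0 <= s <= K -> `|psi s| <= M)
  (sigma0 : probability R R)
  (sigma0_supp : sigma0 `[0, K]%classic = 1%E)
  (sigma : R.-pker (R * R)%type ~> R)
  (sigma_supp : forall x y : R, 0 <= x <= K -> 0 <= y <= K ->
      sigma (x, y) `[0, K]%classic = 1%E)
  (heq : forall x y : R, 0 <= x <= K -> 0 <= y <= K ->
      ((uX b c x y - kappa) - chi * (uY b c x y - kappa))%:E =
      ((psi x)%:E
       - lambda%:E * (\int[sigma (x, y)]_(s in `[0%R, K]%classic) (psi s)%:E)
       - (1 - lambda)%:E * (\int[sigma0]_(s in `[0%R, K]%classic) (psi s)%:E))%E) :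
  0 <= kappa <= b K - c K.
Proof.
case: hgame => K0 [_ [_ [bmon [cmon [b0 [c0 _]]]]]].
set I := `[0%R, K]%classic.
have inI s : I s = (0 <= s <= K) by rewrite /I /= in_itv.
have I0 : I 0 by rewrite inI lexx ltW.
have IK : I K by rewrite inI lexx ltW.
have mI : measurable I by exact: measurable_itv.
have psiI : forall s, I s -> inf (psi @` I) <= psi s <= sup (psi @` I).
  by case: psi_bdd => M psiM; apply: image_inf_le_le_sup => s; rewrite inI; apply: psiM.
have [m0 int0 m0I] := integral_mem_bounds mI sigma0_supp psi_meas psiI.
have lam01 : 0 <= lambda <= 1 by case/andP: hlam => ? ?; rewrite !ltW.
have relation_bounds x y : I x -> I y -> psi x - sup (psi @` I) <=
    (uX b c x y - kappa) - chi * (uY b c x y - kappa) <= psi x - inf (psi @` I).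
  rewrite !inI => Ix Iy; rewrite -!lee_fin heq //.
  have [m -> mpsi] := integral_mem_bounds mI (sigma_supp _ _ Ix Iy) psi_meas psiI.
  by rewrite int0 -!EFinM -!EFinB !lee_fin sub_convex_comb_bounds.
have chi1 : 0 < chi - 1 by rewrite subr_gt0.
apply/andP; split.
- rewrite -(pmulr_rge0 _ chi1).
  apply: (@ge0_of_sub_sup_le _ _ I psi) => [|s Is]; first by exists 0.
  have /andP[+ _] := relation_bounds s 0 Is I0; move/le_trans; apply.
  move: Is; rewrite inI => /andP[s0 sK].
  have bs : 0 <= b s by rewrite -b0 bmon.
  have cs : 0 <= c s by rewrite -c0 cmon.
  exact: payoff_relation_at_zero b0 c0 (ltW hchi) bs cs.
- rewrite -subr_le0 -(pmulr_rle0 _ chi1).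
  apply: (@le0_of_le_sub_inf _ _ I psi) => [|s Is]; first by exists 0.
  have /andP[_] := relation_bounds s K Is IK; apply: le_trans.
  move: Is; rewrite inI => /andP[s0 sK].
  have chi0 : 0 <= chi by rewrite (le_trans ler01) ?ltW.
  exact: payoff_relation_at_top chi0 (bmon _ _ s0 sK (lexx K)) (cmon _ _ s0 sK (lexx K)).
Qed.
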